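(* Let $H$ be an acyclic simple digraph, let $k$ be a positive integer, and let $T$ be a tournament with $|V(T)|\ge d_{\mathrm{eh}}\cdot 2^{|V(H)|}\sqrt{k}$. Then $T$ contains $k$ pairwise arc-disjoint subgraphs isomorphic to $H$.
   Context: A tournament is a simple digraph with exactly one arc between every pair of distinct vertices. $d_{\mathrm{eh}}$ denotes a fixed universal constant with the property that for all positive integers $q,k$, in a complete (undirected) graph on at least $d_{\mathrm{eh}}\cdot q\sqrt{k}$ vertices one can find $k$ pairwise edge-disjoint complete subgraphs, each on $q$ vertices (such a constant exists by results of Erdős and Hanani). *)

From HB Require Import structures.
From mathcomp Require Import all_boot all_order all_algebra.
From mathcomp Require Import reals.
Set Implicit Arguments. Unset Strict Implicit. Unset Printing Implicit Defensive.
Import Order.TTheory GRing.Theory Num.Theory.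
Local Open Scope ring_scope.

Definition acyclic_digraph (V : finType) (e : rel V) : Prop :=
  forall x y : V, e x y -> ~~ connect e y x.

Definition tournament (V : finType) (t : rel V) : Prop :=
  (forall x : V, ~~ t x x) /\ (forall x y : V, x != y -> t x y != t y x).

(* Erdős–Hanani property of the constant d: for all positive q, k, the complete
   graph on n >= d q sqrt(k) vertices (vertex set 'I_n) has k pairwise
   edge-disjoint complete subgraphs on q vertices (vertex sets S_i of size q,
   any two sharing at most one vertex, i.e. no common edge). *)
Definition erdos_hanani_const (R : realType) (d : R) : Prop :=
  forall q k : nat, (0 < q)%N -> (0 < k)%N ->
  forall n : nat, d * q%:R * Num.sqrt (k%:R) <= n%:R ->
  exists S : 'I_k -> {set 'I_n},
    (forall i, #|S i| = q) /\
    (forall i j, i != j -> (#|S i :&: S j| <= 1)%N).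

(* A copy of H in T: an injective map f : V(H) -> V(T) sending arcs to arcs; the
   copy's arc set is {(f x, f y) | h x y}. *)
Definition embeds (VH VT : finType) (h : rel VH) (t : rel VT) (f : VH -> VT) : Prop :=
  injective f /\ (forall x y, h x y -> t (f x) (f y)).

Definition arc_disjoint (VH VT : finType) (h : rel VH) (f g : VH -> VT) : Prop :=
  forall x y x' y', h x y -> h x' y' -> (f x, f y) <> (g x', g y').

(** Every tournament on at least 2^b vertices contains every acyclic digraph
    on b vertices: pick any vertex v; its out- or its in-neighbourhood has at
    least 2^(b-1) vertices, so embed H minus a source (resp. a sink) there by
    induction and send the source (resp. sink) to v.  Given an Erdős–Hanani
    packing of k sets of size 2^|V(H)| in V(T), any two sharing at most one
    vertex, embed H into each set; two copies sharing an arc would share its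
    two distinct endpoints. *)
From HB Require Import structures.
From mathcomp Require Import all_boot all_order all_algebra.
From mathcomp Require Import reals.
From mathcomp Require Import zify.
Import Order.TTheory GRing.Theory Num.Theory.

Set Implicit Arguments.
Unset Strict Implicit.
Unset Printing Implicit Defensive.

Section Acyclic.
Variables (V : finType) (e : rel V).
Hypothesis acyclic_e : acyclic_digraph e.

Lemma acyclic_irrefl x : ~~ e x x.
Proof. by apply/negP => exx; move: (acyclic_e exx); rewrite connect0. Qed.

Lemma acyclic_rev : acyclic_digraph (fun x y => e y x).
Proof. by move=> x y eyx; rewrite connect_rev /=; apply: acyclic_e. Qed.

Lemma acyclic_source (B : {set V}) x1 : x1 \in B ->
  exists2 x0, x0 \in B & {in B, forall y, ~~ e y x0}.
Proof.
move=> x1B; pose ancestors x := [set y in B | connect e y x].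
have [x0 x0B x0_min] := arg_minnP (fun x => #|ancestors x|) x1B.
exists x0 => // y yB; apply/negP => eyx0.
suff : #|ancestors y| < #|ancestors x0| by rewrite ltnNge x0_min.
apply: proper_card; apply/properP; split.
  apply/subsetP => z; rewrite !inE => /andP[-> zy] /=.
  exact: connect_trans zy (connect1 eyx0).
exists x0; first by rewrite !inE connect0 andbT.
by rewrite !inE negb_and (acyclic_e eyx0) orbT.
Qed.

End Acyclic.

Lemma acyclic_sink (V : finType) (e : rel V) (B : {set V}) x1 :
  acyclic_digraph e -> x1 \in B ->
  exists2 x0, x0 \in B & {in B, forall y, ~~ e x0 y}.
Proof. by move=> /acyclic_rev acyclic_rev_e; exact: acyclic_source. Qed.

Lemma tournament_card_neighbours (V : finType) (t : rel V) (A : {set V}) v :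
  tournament t -> v \in A ->
  (#|A| <= (#|[set u in A | t v u]| + #|[set u in A | t u v]|).+1)%N.
Proof.
case=> _ asym vA; rewrite (cardsD1 v A) vA ltnS.
rewrite (leq_trans _ (leq_card_setU _ _)) //.
apply: subset_leq_card; apply/subsetP => u; rewrite !inE => /andP[uv uA].
by rewrite uA; move: (asym u v uv); case: (t u v); case: (t v u).
Qed.

Definition embeds_in (VH VT : finType) (h : rel VH) (t : rel VT)
    (B : {set VH}) (A : {set VT}) (f : VH -> VT) : Prop :=
  [/\ {in B &, injective f}, {in B, forall x, f x \in A}
    & {in B &, forall x y, h x y -> t (f x) (f y)}].

Section Embedding.
Variables (VH VT : finType).

Lemma embeds_in_rev (h : rel VH) (t : rel VT) (B : {set VH}) (A : {set VT}) f :
  embeds_in h t B A f ->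
  embeds_in (fun x y => h y x) (fun x y => t y x) B A f.
Proof. by case=> finj fA fh; split=> // x y xB yB; apply: fh. Qed.

Lemma embeds_in_extend_source (h : rel VH) (t : rel VT) (B : {set VH})
    (A : {set VT}) f x0 v :
  ~~ t v v -> v \in A -> x0 \in B -> {in B, forall y, ~~ h y x0} ->
  embeds_in h t (B :\ x0) [set u in A | t v u] f ->
  embeds_in h t B A (fun x => if x == x0 then v else f x).
Proof.
move=> tvv vA x0B x0_source [finj fA fh].
have fB x : x \in B -> x != x0 -> (f x \in A) && t v (f x).
  by move=> xB xx0; have := fA x; rewrite !inE xx0 xB; apply.
split.
- move=> x y xB yB /=.
  case: eqP => [-> | /eqP xx0]; case: eqP => [-> | /eqP yx0] //.
  + by move=> vf; move: (fB y yB yx0); rewrite -vf (negbTE tvv) andbF.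
  + by move=> fv; move: (fB x xB xx0); rewrite fv (negbTE tvv) andbF.
  + by apply: finj; rewrite !inE ?xx0 ?yx0.
- by move=> x xB /=; case: eqP => [// | /eqP xx0]; case/andP: (fB x xB xx0).
move=> x y xB yB hxy /=.
case: eqP => [ex | /eqP xx0]; case: eqP => [ey | /eqP yx0].
- by move: hxy; rewrite ex ey (negbTE (x0_source _ x0B)).
- by case/andP: (fB y yB yx0).
- by move: (x0_source x xB); rewrite -ey hxy.
- by apply: fh; rewrite // !inE ?xx0 ?yx0.
Qed.

Lemma embeds_in_extend_sink (h : rel VH) (t : rel VT) (B : {set VH})
    (A : {set VT}) f x0 v :
  ~~ t v v -> v \in A -> x0 \in B -> {in B, forall y, ~~ h x0 y} ->
  embeds_in h t (B :\ x0) [set u in A | t u v] f ->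
  embeds_in h t B A (fun x => if x == x0 then v else f x).
Proof.
move=> tvv vA x0B x0_sink /embeds_in_rev f_rev.
exact/embeds_in_rev/(embeds_in_extend_source tvv vA x0B x0_sink f_rev).
Qed.

Variables (h : rel VH) (t : rel VT).
Hypotheses (acyclic_h : acyclic_digraph h) (tournament_t : tournament t).

Lemma acyclic_embeds_in_tournament (B : {set VH}) (A : {set VT}) :
  (2 ^ #|B| <= #|A|)%N -> exists f, embeds_in h t B A f.
Proof.
move=> cardA; move: {-1}#|B| (erefl #|B|) cardA => b.
elim: b B A => [|b IH] B A cardB cardA.
all: have /card_gt0P[v vA] : (0 < #|A|)%N by rewrite (leq_trans _ cardA) ?expn_gt0.
  by exists (fun=> v); split=> x; rewrite (cards0_eq cardB) inE.
have /card_gt0P[x1 x1B] : (0 < #|B|)%N by rewrite cardB.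
have tvv : ~~ t v v by case: tournament_t.
have cardB0 x0 : x0 \in B -> #|B :\ x0| = b.
  by move=> x0B; move: cardB; rewrite (cardsD1 x0 B) x0B => -[].
have := tournament_card_neighbours tournament_t vA; rewrite expnS in cardA.
have [out_large _ | out_small le_A] := leqP (2 ^ b) #|[set u in A | t v u]|.
  have [x0 x0B x0_source] := acyclic_source acyclic_h x1B.
  have [f f_emb] := IH _ _ (cardB0 x0 x0B) out_large.
  by eexists; apply: embeds_in_extend_source f_emb.
have in_large : (2 ^ b <= #|[set u in A | t u v]|)%N by lia.
have [x0 x0B x0_sink] := acyclic_sink acyclic_h x1B.
have [f f_emb] := IH _ _ (cardB0 x0 x0B) in_large.
by eexists; apply: embeds_in_extend_sink f_emb.
Qed.

End Embedding.

Lemma arc_disjoint_small_meet (VH VT : finType) (h : rel VH) (f g : VH -> VT)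
    (A A' : {set VT}) :
  (forall x, ~~ h x x) -> injective f ->
  (forall x, f x \in A) -> (forall x, g x \in A') -> (#|A :&: A'| <= 1)%N ->
  arc_disjoint h f g.
Proof.
move=> irr finj fA gA' meet x y x' y' hxy _ [fgx fgy].
have xy : x != y by apply: contraPneq hxy => ->; rewrite (negbTE (irr y)).
suff : (2 <= #|A :&: A'|)%N by rewrite ltnNge meet.
have <- : #|[set f x; f y]| = 2 by rewrite cards2 (inj_eq finj) xy.
apply: subset_leq_card; apply/subsetP => u /set2P[]->; rewrite inE fA.
- by rewrite fgx gA'.
- by rewrite fgy gA'.
Qed.

Local Open Scope ring_scope.

Theorem lemma14 (R : realType) (d : R) (hd : erdos_hanani_const d)
  (VH : finType) (h : rel VH) (hH : acyclic_digraph h)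
  (k : nat) (hk : (0 < k)%N)
  (VT : finType) (t : rel VT) (hT : tournament t)
  (hsize : d * (2 ^ #|VH|)%:R * Num.sqrt (k%:R) <= #|VT|%:R) :
  exists f : 'I_k -> VH -> VT,
    (forall i, embeds h t (f i)) /\
    (forall i j, i != j -> arc_disjoint h (f i) (f j)).
Proof.
have [S [cardS meetS]] := hd _ _ (expn_gt0 2 #|VH|) hk _ hsize.
pose A i := enum_val @: S i.
have embed_i i : exists f, embeds_in h t [set: VH] (A i) f.
  by apply: (acyclic_embeds_in_tournament hH hT); rewrite cardsT card_imset ?cardS //;
    exact: enum_val_inj.
have [f f_emb] := fin_all_exists embed_i.
have f_inj i : injective (f i) by case: (f_emb i) => finj _ _ x y /finj; apply.
have fA i x : f i x \in A i by case: (f_emb i) => _ fA _; apply: fA.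
exists f; split=> [i | i j ij].
  by split=> // x y hxy; case: (f_emb i) => _ _; apply.
apply: arc_disjoint_small_meet (acyclic_irrefl hH) (f_inj i) (fA i) (fA j) _.
rewrite -imsetI ?card_imset ?meetS // => [|x y _ _]; exact: enum_val_inj.
Qed.
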